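(* Assume $\rho\in(\frac14,\frac12)$. Then, as $h\to0_+$, \[ \lambda_1(\mathcal H_h)=-1-h^{1/2}-\frac12h+o(h). \]
   Context: For $h\in(0,1)$ with $h^{\frac12-\rho}<\frac13$, let $\delta=h^{\rho-\frac12}$. $\mathcal H_h$ is the self-adjoint operator in the weighted space $L^2((0,\delta);(1-h^{1/2}\tau)d\tau)$ associated with the closed quadratic form \[ q_h(u)=\int_0^\delta|u'(\tau)|^2(1-h^{1/2}\tau)\,d\tau-|u(0)|^2 \] on $\{u\in H^1((0,\delta)):u(\delta)=0\}$; it acts as $-\frac{d^2}{d\tau^2}+\frac{h^{1/2}}{1-h^{1/2}\tau}\frac{d}{d\tau}$ with domain $\{u\in H^2((0,\delta)):u'(0)=-u(0),\ u(\delta)=0\}$. $\lambda_1(\mathcal H_h)$ is its lowest eigenvalue. *)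

From Stdlib Require Import Reals Lra.
Open Scope R_scope.

Definition delta (h rho : R) : R := Rpower h (rho - 1/2).

Definition is_eigenfunction (h rho lam : R) (u u1 u2 : R -> R) : Prop :=
  (forall x, 0 <= x <= delta h rho -> derivable_pt_lim u x (u1 x)) /\
  (forall x, 0 <= x <= delta h rho -> derivable_pt_lim u1 x (u2 x)) /\
  u1 0 = - u 0 /\
  u (delta h rho) = 0 /\
  (forall x, 0 <= x <= delta h rho ->
     - u2 x + sqrt h / (1 - sqrt h * x) * u1 x = lam * u x) /\
  (exists x, 0 <= x <= delta h rho /\ u x <> 0).

Definition is_eigenvalue (h rho lam : R) : Prop :=
  exists u u1 u2 : R -> R, is_eigenfunction h rho lam u u1 u2.

Definition is_lowest_eigenvalue (h rho lam : R) : Prop :=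
  is_eigenvalue h rho lam /\ (forall mu, is_eigenvalue h rho mu -> lam <= mu).

(* Write [s = sqrt h], [d = delta h rho] and [lam = -4 s^2 k].  The substitution
   [w = k (1 - s x)^2] turns [- u'' + s / (1 - s x) u' = lam u] into the modified
   Bessel equation [w f'' + f' = f], solved by the entire series [P(w) = I_0(2 sqrt w)]
   and by [Q(w) - ln (1 - s x) P(w)].  Their combination [u_k] vanishing at [d] is
   positive on [[0, d)]; hence, by Sturm comparison, [lam] is the lowest eigenvalue as
   soon as [u_k] satisfies the Robin condition, i.e. its Robin defect [u_k(0) + u_k'(0)]
   vanishes.  Comparing [u_k] with the quasimodes [e^(-x) (1 + a x + s^2 x^2 / 4)]
   through the weighted Wronskian [(1 - s x) (phi' u - phi u')] shows that the defect
   changes sign between [lam = -1 - s - s^2/2 -+ eps s^2] once [h] is small, and the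
   intermediate value theorem yields the root.  Smallness of the quasimode residual
   needs [s d^2 = h^(2 rho - 1/2) -> 0], which is where [rho > 1/4] enters. *)

From Stdlib Require Import Reals Lra Lia Psatz.
From Coquelicot Require Import Coquelicot.
Open Scope R_scope.
Set Bullet Behavior "Strict Subproofs".

(** * Power series solutions of [w f'' + f' = f] *)

Lemma INR_S_ge1 n : 1 <= INR (S n).
Proof. rewrite S_INR; pose proof (pos_INR n); lra. Qed.

Lemma CV_radius_infinite_of_ratio (a : nat -> R) (C : R) :
  (forall n, 0 < a n) -> (forall n, a (S n) <= a n * (C / INR (S n))) ->
  CV_radius a = p_infty.
Proof.
  intros Hpos Hratio.
  apply CV_radius_infinite_DAlembert.
  - intro n; pose proof (Hpos n); lra.
  - apply is_lim_seq_le_le with (u := fun _ => 0) (w := fun n => C * / INR (S n)).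
    + intro n. pose proof (Hpos n). pose proof (Hpos (S n)).
      pose proof (Hratio n). pose proof (INR_S_ge1 n).
      rewrite Rabs_pos_eq by (apply Rlt_le, Rdiv_lt_0_compat; lra).
      split; [apply Rlt_le, Rdiv_lt_0_compat; lra |].
      apply Rmult_le_reg_r with (a n); [lra |].
      unfold Rdiv in *. rewrite Rmult_assoc, Rinv_l, Rmult_1_r by lra. lra.
    + apply is_lim_seq_const.
    + replace 0 with (C * 0) by ring.
      apply (is_lim_seq_scal_l _ C 0), (is_lim_seq_incr_1 (fun n => / INR n)).
      apply (is_lim_seq_inv INR p_infty is_lim_seq_INR). discriminate.
Qed.

(* [bessel_coef n = 1 / (n!)^2] and [harmonic_coef n = H_n / (n!)^2], with [H_n]
   the harmonic numbers; the recursions are the ones forced by the ODEs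
   [bessel_P_ode] and [bessel_Q_ode]. *)
Fixpoint bessel_coef (n : nat) : R :=
  match n with
  | O => 1
  | S m => bessel_coef m / (INR (S m) * INR (S m))
  end.

Fixpoint harmonic_coef (n : nat) : R :=
  match n with
  | O => 0
  | S m => (harmonic_coef m + INR (S m) * bessel_coef (S m)) / (INR (S m) * INR (S m))
  end.

Lemma bessel_coef_S n : bessel_coef (S n) = bessel_coef n / (INR (S n) * INR (S n)).
Proof. reflexivity. Qed.

Lemma harmonic_coef_S n : harmonic_coef (S n) =
  (harmonic_coef n + INR (S n) * bessel_coef (S n)) / (INR (S n) * INR (S n)).
Proof. reflexivity. Qed.

Lemma bessel_coef_pos n : 0 < bessel_coef n.
Proof.
  induction n as [|n IH]; [simpl; lra |]. rewrite bessel_coef_S.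
  pose proof (INR_S_ge1 n). apply Rdiv_lt_0_compat; nra.
Qed.

Lemma bessel_coef_le_harmonic_coef n : (1 <= n)%nat -> bessel_coef n <= harmonic_coef n.
Proof.
  induction n as [|n IH]; intros Hn; [lia |].
  destruct n as [|n]; [simpl; lra |].
  specialize (IH ltac:(lia)).
  rewrite harmonic_coef_S, (bessel_coef_S (S n)) at 1.
  pose proof (bessel_coef_pos (S (S n))). pose proof (INR_S_ge1 (S n)).
  apply Rmult_le_compat_r; [apply Rlt_le, Rinv_0_lt_compat; nra |].
  pose proof (bessel_coef_pos (S n)). nra.
Qed.

Lemma harmonic_coef_ratio n : (1 <= n)%nat ->
  harmonic_coef (S n) <= harmonic_coef n * (2 / INR (S n)).
Proof.
  intros Hn. pose proof (bessel_coef_le_harmonic_coef n Hn) as Hle.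
  pose proof (bessel_coef_pos n). pose proof (INR_S_ge1 n).
  rewrite harmonic_coef_S, bessel_coef_S.
  set (m := INR (S n)) in *.
  replace ((harmonic_coef n + m * (bessel_coef n / (m * m))) / (m * m))
    with ((harmonic_coef n + bessel_coef n / m) / (m * m)) by (field; lra).
  apply Rmult_le_reg_r with (m * m); [nra |].
  replace ((harmonic_coef n + bessel_coef n / m) / (m * m) * (m * m))
    with (harmonic_coef n + bessel_coef n / m) by (field; lra).
  replace (harmonic_coef n * (2 / m) * (m * m)) with (2 * m * harmonic_coef n) by (field; lra).
  assert (bessel_coef n / m <= bessel_coef n).
  { apply Rmult_le_reg_r with m; [lra |]. unfold Rdiv. rewrite Rmult_assoc, Rinv_l by lra. nra. }
  nra.
Qed.

Lemma CV_radius_bessel_coef : CV_radius bessel_coef = p_infty.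
Proof.
  apply CV_radius_infinite_of_ratio with 1; [exact bessel_coef_pos |].
  intro n. rewrite bessel_coef_S. pose proof (bessel_coef_pos n). pose proof (INR_S_ge1 n).
  replace (bessel_coef n / (INR (S n) * INR (S n)))
    with (bessel_coef n * (1 / INR (S n)) * / INR (S n)) by (field; lra).
  rewrite <- (Rmult_1_r (bessel_coef n * (1 / INR (S n)))) at 2.
  apply Rmult_le_compat_l; [apply Rmult_le_pos, Rlt_le, Rdiv_lt_0_compat; lra |].
  rewrite <- Rinv_1. apply Rinv_le_contravar; lra.
Qed.

Lemma CV_radius_harmonic_coef : CV_radius harmonic_coef = p_infty.
Proof.
  rewrite <- (CV_radius_ext (PS_incr_1 (fun n => harmonic_coef (S n))))
    by (intros [|n]; reflexivity).
  rewrite CV_radius_incr_1.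
  apply CV_radius_infinite_of_ratio with 2.
  - intro n. pose proof (bessel_coef_pos (S n)).
    pose proof (bessel_coef_le_harmonic_coef (S n) ltac:(lia)). lra.
  - intro n. eapply Rle_trans; [apply harmonic_coef_ratio; lia |].
    apply Rmult_le_compat_l.
    + pose proof (bessel_coef_pos (S n)).
      pose proof (bessel_coef_le_harmonic_coef (S n) ltac:(lia)). lra.
    + pose proof (INR_S_ge1 n). unfold Rdiv. apply Rmult_le_compat_l; [lra |].
      apply Rinv_le_contravar; [lra | rewrite (S_INR (S n)); lra].
Qed.

Lemma is_derive_PSeries_entire (a : nat -> R) x : CV_radius a = p_infty ->
  is_derive (PSeries a) x (PSeries (PS_derive a) x).
Proof. intro Ha. apply is_derive_PSeries. rewrite Ha. exact I. Qed.

Lemma ex_pseries_entire (a : nat -> R) x : CV_radius a = p_infty -> ex_pseries a x.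
Proof. intro Ha. apply CV_radius_inside. rewrite Ha. exact I. Qed.

Definition bessel_P (w : R) : R := PSeries bessel_coef w.
Definition bessel_P' (w : R) : R := PSeries (PS_derive bessel_coef) w.
Definition bessel_P'' (w : R) : R := PSeries (PS_derive (PS_derive bessel_coef)) w.
Definition bessel_Q (w : R) : R := PSeries harmonic_coef w.
Definition bessel_Q' (w : R) : R := PSeries (PS_derive harmonic_coef) w.
Definition bessel_Q'' (w : R) : R := PSeries (PS_derive (PS_derive harmonic_coef)) w.

Lemma CV_radius_bessel_coef' : CV_radius (PS_derive bessel_coef) = p_infty.
Proof. rewrite CV_radius_derive. exact CV_radius_bessel_coef. Qed.

Lemma CV_radius_bessel_coef'' : CV_radius (PS_derive (PS_derive bessel_coef)) = p_infty.
Proof. rewrite CV_radius_derive. exact CV_radius_bessel_coef'. Qed.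

Lemma CV_radius_harmonic_coef' : CV_radius (PS_derive harmonic_coef) = p_infty.
Proof. rewrite CV_radius_derive. exact CV_radius_harmonic_coef. Qed.

Lemma CV_radius_harmonic_coef'' : CV_radius (PS_derive (PS_derive harmonic_coef)) = p_infty.
Proof. rewrite CV_radius_derive. exact CV_radius_harmonic_coef'. Qed.

Lemma is_derive_bessel_P w : is_derive bessel_P w (bessel_P' w).
Proof. exact (is_derive_PSeries_entire _ w CV_radius_bessel_coef). Qed.

Lemma is_derive_bessel_P' w : is_derive bessel_P' w (bessel_P'' w).
Proof. exact (is_derive_PSeries_entire _ w CV_radius_bessel_coef'). Qed.

Lemma is_derive_bessel_Q w : is_derive bessel_Q w (bessel_Q' w).
Proof. exact (is_derive_PSeries_entire _ w CV_radius_harmonic_coef). Qed.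

Lemma is_derive_bessel_Q' w : is_derive bessel_Q' w (bessel_Q'' w).
Proof. exact (is_derive_PSeries_entire _ w CV_radius_harmonic_coef'). Qed.

Lemma bessel_P_ode w : w * bessel_P'' w + bessel_P' w = bessel_P w.
Proof.
  unfold bessel_P'', bessel_P', bessel_P.
  rewrite <- PSeries_incr_1, <- PSeries_plus.
  2: apply ex_pseries_incr_1, ex_pseries_entire, CV_radius_bessel_coef''.
  2: apply ex_pseries_entire, CV_radius_bessel_coef'.
  apply PSeries_ext. intros [|n]; unfold PS_plus, PS_incr_1, PS_derive.
  - rewrite plus_zero_l. simpl. field.
  - change plus with Rplus. rewrite (bessel_coef_S (S n)).
    pose proof (INR_S_ge1 (S n)). rewrite (S_INR (S n)) in *. field. lra.
Qed.

Lemma bessel_Q_ode w : w * bessel_Q'' w + bessel_Q' w = bessel_Q w + bessel_P' w.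
Proof.
  unfold bessel_Q'', bessel_Q', bessel_Q, bessel_P'.
  rewrite <- PSeries_incr_1, <- !PSeries_plus.
  2: apply ex_pseries_entire, CV_radius_harmonic_coef.
  2: apply ex_pseries_entire, CV_radius_bessel_coef'.
  2: apply ex_pseries_incr_1, ex_pseries_entire, CV_radius_harmonic_coef''.
  2: apply ex_pseries_entire, CV_radius_harmonic_coef'.
  apply PSeries_ext. intros [|n]; unfold PS_plus, PS_incr_1, PS_derive.
  - rewrite plus_zero_l. change plus with Rplus. simpl. field.
  - change plus with Rplus. rewrite (harmonic_coef_S (S n)).
    pose proof (INR_S_ge1 (S n)). rewrite (S_INR (S n)) in *. field. lra.
Qed.

Lemma bessel_P_0 : bessel_P 0 = 1.
Proof. unfold bessel_P. rewrite PSeries_0. reflexivity. Qed.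

Lemma bessel_P_ge1 w : 0 <= w -> 1 <= bessel_P w.
Proof.
  intros Hw. unfold bessel_P.
  rewrite PSeries_decr_1 by (apply ex_pseries_entire, CV_radius_bessel_coef).
  assert (0 <= PSeries (PS_decr_1 bessel_coef) w).
  { rewrite <- (PSeries_const_0 w). apply Series_le.
    - intro n. rewrite Rmult_0_l. split; [lra |].
      apply Rmult_le_pos; [apply Rlt_le, bessel_coef_pos | apply pow_le; lra].
    - destruct (ex_pseries_entire (PS_decr_1 bessel_coef) w) as [l Hl].
      { rewrite CV_radius_decr_1. exact CV_radius_bessel_coef. }
      exists l. eapply is_series_ext; [| exact Hl]. intro n.
      unfold scal; simpl. rewrite pow_n_pow. change mult with Rmult. ring. }
  simpl. nra.
Qed.

Lemma is_derive_unique_eta (f : R -> R) x l :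
  is_derive f x l -> Derive (fun t => f t) x = l.
Proof. apply is_derive_unique. Qed.

Ltac bessel_derive :=
  auto_derive;
  repeat match goal with
  | |- True => exact I
  | |- _ /\ _ => split
  | |- ex_derive (fun t => bessel_P t) ?y => exact (ex_intro _ _ (is_derive_bessel_P y))
  | |- ex_derive (fun t => bessel_P' t) ?y => exact (ex_intro _ _ (is_derive_bessel_P' y))
  | |- ex_derive (fun t => bessel_Q t) ?y => exact (ex_intro _ _ (is_derive_bessel_Q y))
  | |- ex_derive (fun t => bessel_Q' t) ?y => exact (ex_intro _ _ (is_derive_bessel_Q' y))
  | |- context [Derive (fun t => bessel_P t) ?y] =>
      rewrite (is_derive_unique_eta _ _ _ (is_derive_bessel_P y))
  | |- context [Derive (fun t => bessel_P' t) ?y] =>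
      rewrite (is_derive_unique_eta _ _ _ (is_derive_bessel_P' y))
  | |- context [Derive (fun t => bessel_Q t) ?y] =>
      rewrite (is_derive_unique_eta _ _ _ (is_derive_bessel_Q y))
  | |- context [Derive (fun t => bessel_Q' t) ?y] =>
      rewrite (is_derive_unique_eta _ _ _ (is_derive_bessel_Q' y))
  end.

Lemma bessel_wronskian w :
  w * (bessel_P w * bessel_Q' w - bessel_P' w * bessel_Q w) = (bessel_P w ^ 2 - 1) / 2.
Proof.
  set (F := fun w => w * (bessel_P w * bessel_Q' w - bessel_P' w * bessel_Q w)
                     - (bessel_P w ^ 2 - 1) / 2).
  assert (HF : forall x : R, is_derive F x 0).
  { intro x. unfold F. bessel_derive.
    pose proof (f_equal (Rmult (bessel_P x)) (bessel_Q_ode x)).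
    pose proof (f_equal (Rmult (bessel_Q x)) (bessel_P_ode x)). lra. }
  assert (HF0 : F 0 = 0) by (unfold F; rewrite bessel_P_0; field).
  destruct (MVT_gen F 0 w (fun _ => 0)) as [c [_ Hc]].
  - intros x _. apply HF.
  - intros x _. apply derivable_continuous_pt. exists 0. apply is_derive_Reals, HF.
  - unfold F in *. lra.
Qed.

(** * Solutions of the eigenvalue equation *)

(* [auto_derive] unfolds [1 - s x] and [_ ^ 2]; fold them back so that [ring] sees
   the same Bessel atoms on both sides. *)
Ltac fold_bessel_argument s k x :=
  change (k * ((1 + - (s * x)) * ((1 + - (s * x)) * 1))) with (k * (1 - s * x) ^ 2);
  change (1 + - (s * x)) with (1 - s * x).

Section TransformedBessel.

Variables s k : R.

Definition regular_sol (x : R) : R := bessel_P (k * (1 - s*x)^2).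
Definition regular_sol' (x : R) : R :=
  -2*s*k*(1 - s*x) * bessel_P' (k * (1 - s*x)^2).
Definition regular_sol'' (x : R) : R :=
  4*s^2*k^2*(1 - s*x)^2 * bessel_P'' (k * (1 - s*x)^2)
  + 2*s^2*k * bessel_P' (k * (1 - s*x)^2).

Definition log_sol (x : R) : R :=
  bessel_Q (k * (1 - s*x)^2) - ln (1 - s*x) * bessel_P (k * (1 - s*x)^2).
Definition log_sol' (x : R) : R :=
  s / (1 - s*x) * bessel_P (k * (1 - s*x)^2)
  - 2*s*k*(1 - s*x) * (bessel_Q' (k * (1 - s*x)^2) - ln (1 - s*x) * bessel_P' (k * (1 - s*x)^2)).
Definition log_sol'' (x : R) : R :=
  s^2 / (1 - s*x)^2 * bessel_P (k * (1 - s*x)^2)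
  - 4*s^2*k * bessel_P' (k * (1 - s*x)^2)
  + 4*s^2*k^2*(1 - s*x)^2
      * (bessel_Q'' (k * (1 - s*x)^2) - ln (1 - s*x) * bessel_P'' (k * (1 - s*x)^2))
  + 2*s^2*k * (bessel_Q' (k * (1 - s*x)^2) - ln (1 - s*x) * bessel_P' (k * (1 - s*x)^2)).

Lemma is_derive_regular_sol (x : R) : is_derive regular_sol x (regular_sol' x).
Proof.
  unfold regular_sol, regular_sol'. bessel_derive. fold_bessel_argument s k x. ring.
Qed.

Lemma is_derive_regular_sol' (x : R) : is_derive regular_sol' x (regular_sol'' x).
Proof.
  unfold regular_sol', regular_sol''. bessel_derive. fold_bessel_argument s k x. ring.
Qed.

Lemma is_derive_log_sol (x : R) : 0 < 1 - s*x -> is_derive log_sol x (log_sol' x).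
Proof.
  intro Hx. unfold log_sol, log_sol'. bessel_derive; fold_bessel_argument s k x; [lra |].
  field. lra.
Qed.

Lemma is_derive_log_sol' (x : R) : 0 < 1 - s*x -> is_derive log_sol' x (log_sol'' x).
Proof.
  intro Hx. unfold log_sol', log_sol''. bessel_derive; fold_bessel_argument s k x; try lra.
  field. lra.
Qed.

Lemma regular_sol_ode (x : R) : 0 < 1 - s*x ->
  - regular_sol'' x + s / (1 - s*x) * regular_sol' x = -4*s^2*k * regular_sol x.
Proof.
  intro Hx. unfold regular_sol'', regular_sol', regular_sol.
  rewrite <- (bessel_P_ode (k * (1 - s*x)^2)). field. lra.
Qed.

Lemma log_sol_ode (x : R) : 0 < 1 - s*x ->
  - log_sol'' x + s / (1 - s*x) * log_sol' x = -4*s^2*k * log_sol x.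
Proof.
  intro Hx. unfold log_sol'', log_sol', log_sol.
  set (w := k * (1 - s*x)^2).
  replace (bessel_Q w) with (w * bessel_Q'' w + bessel_Q' w - bessel_P' w)
    by (pose proof (bessel_Q_ode w); lra).
  rewrite <- (bessel_P_ode w). unfold w. field. lra.
Qed.

Lemma regular_log_wronskian (x : R) : 0 < 1 - s*x ->
  (1 - s*x) * (regular_sol x * log_sol' x - regular_sol' x * log_sol x) = s.
Proof.
  intro Hx. unfold regular_sol, regular_sol', log_sol, log_sol'.
  pose proof (bessel_wronskian (k * (1 - s*x)^2)) as W.
  set (w := k * (1 - s*x)^2) in *.
  transitivity (s * bessel_P w ^ 2
    - 2 * s * (w * (bessel_P w * bessel_Q' w - bessel_P' w * bessel_Q w))).
  - unfold w. field. lra.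
  - rewrite W. field.
Qed.

End TransformedBessel.

(** * Sturm comparison *)

Record ode_solution (s d lam : R) (u u' u'' : R -> R) : Prop := {
  sol_derive : forall x, 0 <= x <= d -> is_derive u x (u' x);
  sol_derive' : forall x, 0 <= x <= d -> is_derive u' x (u'' x);
  sol_ode : forall x, 0 <= x <= d -> - u'' x + s / (1 - s*x) * u' x = lam * u x }.

Lemma ode_solution_opp s d lam u u' u'' : ode_solution s d lam u u' u'' ->
  ode_solution s d lam (fun x => - u x) (fun x => - u' x) (fun x => - u'' x).
Proof.
  intros [Du Du' Eu]. split.
  - intros x Hx. apply (is_derive_opp u), Du, Hx.
  - intros x Hx. apply (is_derive_opp u'), Du', Hx.
  - intros x Hx. specialize (Eu x Hx). lra.
Qed.

Definition weighted_wronskian (s : R) (u u' v v' : R -> R) (x : R) : R :=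
  (1 - s*x) * (v' x * u x - v x * u' x).

(* [(1 - s x) (lam v - (- v'' + s / (1 - s x) v'))], written without division. *)
Definition sturm_residual (s lam : R) (v v' v'' : R -> R) (x : R) : R :=
  - s * v' x + (1 - s*x) * v'' x + lam * (1 - s*x) * v x.

Lemma is_derive_weighted_wronskian s d lam u u' u'' v v' v'' x :
  ode_solution s d lam u u' u'' ->
  (forall x, 0 <= x <= d -> is_derive v x (v' x)) ->
  (forall x, 0 <= x <= d -> is_derive v' x (v'' x)) ->
  0 <= x <= d -> 0 < 1 - s*x ->
  is_derive (weighted_wronskian s u u' v v') x (u x * sturm_residual s lam v v' v'' x).
Proof.
  intros [Du Du' Eu] Dv Dv' Hx Hsx. unfold weighted_wronskian, sturm_residual.
  pose proof (Du x Hx) as H1. pose proof (Du' x Hx) as H2.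
  pose proof (Dv x Hx) as H3. pose proof (Dv' x Hx) as H4.
  auto_derive.
  - repeat split; eexists; eassumption.
  - rewrite (is_derive_unique_eta _ _ _ H1), (is_derive_unique_eta _ _ _ H2),
      (is_derive_unique_eta _ _ _ H3), (is_derive_unique_eta _ _ _ H4).
    replace (u'' x) with (s / (1 - s*x) * u' x - lam * u x) by (specialize (Eu x Hx); lra).
    field. lra.
Qed.

Lemma weighted_wronskian_decreasing s d lam u u' u'' v v' v'' a b :
  ode_solution s d lam u u' u'' ->
  (forall x, 0 <= x <= d -> is_derive v x (v' x)) ->
  (forall x, 0 <= x <= d -> is_derive v' x (v'' x)) ->
  (forall x, 0 <= x <= d -> 0 < 1 - s*x) ->
  0 <= a -> a < b -> b <= d ->
  (forall x, a < x < b -> u x * sturm_residual s lam v v' v'' x < 0) ->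
  weighted_wronskian s u u' v v' b < weighted_wronskian s u u' v v' a.
Proof.
  intros Hu Dv Dv' Hsx Ha Hab Hb Hres.
  destruct (MVT_cor2 (weighted_wronskian s u u' v v')
              (fun x => u x * sturm_residual s lam v v' v'' x) a b Hab) as [c [Hc Hac]].
  - intros c Hc. apply is_derive_Reals.
    apply (is_derive_weighted_wronskian s d lam u u' u'' v v' v''); auto; [lra | apply Hsx; lra].
  - specialize (Hres c Hac). nra.
Qed.

Lemma continuity_pt_pos_nbhd (f : R -> R) b : continuity_pt f b -> 0 < f b ->
  exists eta, 0 < eta /\ forall z, Rabs (z - b) < eta -> 0 < f z.
Proof.
  intros Hc Hb. destruct (Hc (f b) Hb) as [eta [Heta Hnear]].
  exists eta. split; [exact Heta |]. intros z Hz.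
  destruct (Req_dec z b) as [-> | Hzb]; [exact Hb |].
  assert (Hd : R_dist (f z) (f b) < f b) by (apply Hnear; repeat split; auto).
  unfold R_dist in Hd. apply Rabs_def2 in Hd. lra.
Qed.

Lemma first_exit_right (f : R -> R) p q : p <= q -> 0 < f p ->
  (forall x, p <= x <= q -> continuity_pt f x) ->
  exists b, p <= b <= q /\ (forall y, p <= y < b -> 0 < f y) /\
            0 <= f b /\ (f b = 0 \/ b = q).
Proof.
  intros Hpq Hp Hc.
  set (E := fun x => p <= x <= q /\ forall y, p <= y <= x -> 0 < f y).
  assert (HE : E p) by (split; [lra | intros y Hy; replace y with p by lra; exact Hp]).
  destruct (completeness E) as [b [Hub Hlub]].
  { exists q. intros x [Hx _]. lra. }
  { exists p. exact HE. }
  assert (Hpb : p <= b) by (apply Hub, HE).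
  assert (Hbq : b <= q) by (apply Hlub; intros x [Hx _]; lra).
  assert (Hbelow : forall y, p <= y < b -> 0 < f y).
  { intros y Hy. destruct (Rle_lt_dec (f y) 0) as [Hfy | Hfy]; [exfalso | exact Hfy].
    assert (b <= y); [| lra].
    apply Hlub. intros x [_ Hpos]. apply Rnot_lt_le. intro Hyx.
    specialize (Hpos y ltac:(lra)). lra. }
  assert (Hnonneg : 0 <= f b).
  { apply Rnot_lt_le. intro Hneg.
    destruct (continuity_pt_pos_nbhd (fun x => - f x) b) as [eta [Heta Hnear]];
      [apply continuity_pt_opp, Hc; lra | lra |].
    destruct (Req_dec b p) as [-> | Hbp]; [lra |].
    set (y := Rmax p (b - eta/2)).
    assert (Hy : p <= y < b) by (unfold y, Rmax; destruct Rle_dec; lra).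
    assert (Hyb : Rabs (y - b) < eta)
      by (rewrite Rabs_left by lra; unfold y, Rmax in *; destruct Rle_dec; lra).
    specialize (Hnear y Hyb). specialize (Hbelow y Hy). lra. }
  exists b. do 3 (split; [auto |]).
  destruct (Req_dec (f b) 0) as [| Hfb]; [now left |].
  destruct (Req_dec b q) as [| Hbq']; [now right |]. exfalso.
  destruct (continuity_pt_pos_nbhd f b) as [eta [Heta Hnear]]; [apply Hc; lra | lra |].
  set (x := Rmin q (b + eta/2)).
  assert (Hx : b < x <= q) by (unfold x, Rmin; destruct Rle_dec; lra).
  assert (HEx : E x).
  { split; [lra |]. intros y Hy. destruct (Rlt_le_dec y b); [apply Hbelow; lra |].
    apply Hnear. rewrite Rabs_pos_eq by lra. unfold x, Rmin in *; destruct Rle_dec; lra. }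
  specialize (Hub x HEx). lra.
Qed.

Lemma first_exit_left (f : R -> R) p q : p <= q -> 0 < f q ->
  (forall x, p <= x <= q -> continuity_pt f x) ->
  exists a, p <= a <= q /\ (forall y, a < y <= q -> 0 < f y) /\
            0 <= f a /\ (f a = 0 \/ a = p).
Proof.
  intros Hpq Hq Hc.
  destruct (first_exit_right (fun y => f (- y)) (- q) (- p)) as [b [Hb [Hpos [Hnonneg Hend]]]].
  - lra.
  - rewrite Ropp_involutive. exact Hq.
  - intros x Hx. apply (continuity_pt_comp Ropp f).
    + apply continuity_pt_opp, continuity_pt_id.
    + apply Hc. lra.
  - exists (- b). split; [lra |]. split.
    + intros y Hy. rewrite <- (Ropp_involutive y). apply Hpos. lra.
    + split; [exact Hnonneg | destruct Hend; [left | right]; lra].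
Qed.

Lemma positive_nodal_interval (f : R -> R) d x1 :
  (forall x, 0 <= x <= d -> continuity_pt f x) -> f d = 0 ->
  0 <= x1 <= d -> 0 < f x1 ->
  exists a b, 0 <= a < b /\ b <= d /\ (forall y, a < y < b -> 0 < f y) /\
              f b = 0 /\ (f a = 0 \/ a = 0).
Proof.
  intros Hc Hd Hx1 Hfx1.
  destruct (first_exit_right f x1 d) as [b [Hb [Hright [_ Hbend]]]];
    [lra | exact Hfx1 | intros x Hx; apply Hc; lra |].
  destruct (first_exit_left f 0 x1) as [a [Ha [Hleft [_ Haend]]]];
    [lra | exact Hfx1 | intros x Hx; apply Hc; lra |].
  assert (Hfb : f b = 0) by (destruct Hbend as [| ->]; auto).
  assert (Hx1b : x1 < b) by (destruct (Req_dec x1 b) as [<- |]; lra).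
  exists a, b. repeat split; try lra; auto.
  intros y Hy. destruct (Rle_lt_dec y x1); [apply Hleft | apply Hright]; lra.
Qed.

Lemma is_derive_le0_at_zero_after_pos (f : R -> R) c b l : c < b -> f b = 0 ->
  (forall y, c < y < b -> 0 < f y) -> is_derive f b l -> l <= 0.
Proof.
  intros Hcb Hfb Hpos Hd. apply is_derive_Reals in Hd.
  apply Rnot_lt_le. intro Hl.
  destruct (Hd (l/2) ltac:(lra)) as [del Hdel].
  set (t := - Rmin (del/2) ((b - c)/2)).
  pose proof (cond_pos del).
  assert (Ht : c < b + t < b /\ Rabs t < del)
    by (unfold t, Rmin; destruct Rle_dec; rewrite Rabs_left by lra; lra).
  specialize (Hdel t ltac:(lra) (proj2 Ht)).
  rewrite Hfb, Rminus_0_r in Hdel. apply Rabs_def2 in Hdel.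
  specialize (Hpos (b + t) (proj1 Ht)).
  assert (f (b + t) / t < 0) by (apply Rdiv_pos_neg; lra).
  lra.
Qed.

Lemma is_derive_ge0_at_zero_before_pos (f : R -> R) a c l : a < c -> f a = 0 ->
  (forall y, a < y < c -> 0 < f y) -> is_derive f a l -> 0 <= l.
Proof.
  intros Hac Hfa Hpos Hd.
  assert (Hg : is_derive (fun y => f (- y)) (- a) (-1 * l)).
  { apply (is_derive_comp f Ropp); [rewrite Ropp_involutive; exact Hd |].
    auto_derive; [exact I | ring]. }
  enough (-1 * l <= 0) by lra.
  apply (is_derive_le0_at_zero_after_pos (fun y => f (- y)) (- c) (- a)); auto; try lra.
  - rewrite Ropp_involutive. exact Hfa.
  - intros y Hy. apply Hpos. lra.
Qed.

Lemma ode_solution_continuity_pt s d lam u u' u'' x :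
  ode_solution s d lam u u' u'' -> 0 <= x <= d -> continuity_pt u x.
Proof.
  intros Hu Hx. apply derivable_continuous_pt.
  exists (u' x). apply is_derive_Reals, (sol_derive _ _ _ _ _ _ Hu), Hx.
Qed.

Lemma sturm_residual_of_solution s d lam mu v v' v'' x :
  ode_solution s d lam v v' v'' -> 0 <= x <= d -> 0 < 1 - s*x ->
  sturm_residual s mu v v' v'' x = (1 - s*x) * (mu - lam) * v x.
Proof.
  intros Hv Hx Hsx. unfold sturm_residual.
  pose proof (sol_ode _ _ _ _ _ _ Hv x Hx).
  replace (v'' x) with (s / (1 - s*x) * v' x - lam * v x) by lra. field. lra.
Qed.

Lemma weighted_wronskian_at_right_zero s (u u' v v' : R -> R) a b :
  a < b -> u b = 0 -> (forall y, a < y < b -> 0 < u y) -> is_derive u b (u' b) ->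
  0 <= v b -> 0 < 1 - s*b -> 0 <= weighted_wronskian s u u' v v' b.
Proof.
  intros Hab Hub Hpos Du Hvb Hsb.
  pose proof (is_derive_le0_at_zero_after_pos u a b (u' b) Hab Hub Hpos Du).
  unfold weighted_wronskian. rewrite Hub.
  replace (v' b * 0 - v b * u' b) with (v b * - u' b) by ring.
  apply Rmult_le_pos; [lra | apply Rmult_le_pos; lra].
Qed.

Lemma weighted_wronskian_at_left_zero s (u u' v v' : R -> R) a b :
  a < b -> u a = 0 -> (forall y, a < y < b -> 0 < u y) -> is_derive u a (u' a) ->
  0 <= v a -> 0 < 1 - s*a -> weighted_wronskian s u u' v v' a <= 0.
Proof.
  intros Hab Hua Hpos Du Hva Hsa.
  pose proof (is_derive_ge0_at_zero_before_pos u a b (u' a) Hab Hua Hpos Du).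
  unfold weighted_wronskian. rewrite Hua.
  replace (v' a * 0 - v a * u' a) with (- (v a * u' a)) by ring.
  assert (0 <= (1 - s*a) * (v a * u' a)) by (apply Rmult_le_pos; [lra | apply Rmult_le_pos; lra]).
  lra.
Qed.

(* Sturm comparison of [w] with [v] on a nodal interval [(a, b)] of [w]: if [mu < lam]
   the weighted Wronskian would decrease strictly from [<= 0] at [a] to [>= 0] at [b]. *)
Lemma eigenvalue_le_of_positive_solution s d lam mu v v' v'' w w' w'' x1 :
  (forall x, 0 <= x <= d -> 0 < 1 - s*x) ->
  ode_solution s d lam v v' v'' -> ode_solution s d mu w w' w'' ->
  v' 0 = - v 0 -> w' 0 = - w 0 -> w d = 0 ->
  (forall x, 0 <= x < d -> 0 < v x) -> 0 <= v d ->
  0 <= x1 <= d -> 0 < w x1 -> lam <= mu.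
Proof.
  intros Hsx Hv Hw Hv0 Hw0 Hwd Hvpos Hvd Hx1 Hwx1.
  apply Rnot_lt_le. intro Hlt.
  destruct (positive_nodal_interval w d x1) as [a [b [Hab [Hbd [Hwpos [Hwb Hwa]]]]]];
    try (intros x Hx; apply (ode_solution_continuity_pt s d mu w w' w'')); auto.
  assert (Hvnonneg : forall x, 0 <= x <= d -> 0 <= v x)
    by (intros x Hx; destruct (Req_dec x d) as [-> | ]; [exact Hvd | left; apply Hvpos; lra]).
  assert (Hdecr : weighted_wronskian s w w' v v' b < weighted_wronskian s w w' v v' a).
  { apply (weighted_wronskian_decreasing s d mu w w' w'' v v' v'');
      [exact Hw | apply Hv | apply Hv | exact Hsx | lra | lra | lra |].
    intros x Hx. rewrite (sturm_residual_of_solution s d lam mu v v' v'' x Hv); try lra;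
      [| apply Hsx; lra].
    pose proof (Hsx x ltac:(lra)). pose proof (Hwpos x Hx). pose proof (Hvpos x ltac:(lra)).
    assert (0 < (1 - s*x) * (lam - mu) * v x)
      by (apply Rmult_lt_0_compat; [apply Rmult_lt_0_compat |]; lra).
    nra. }
  assert (Hb : 0 <= weighted_wronskian s w w' v v' b).
  { apply (weighted_wronskian_at_right_zero s w w' v v' a b (proj2 Hab) Hwb Hwpos);
      [apply (sol_derive _ _ _ _ _ _ Hw) | apply Hvnonneg | apply Hsx]; lra. }
  assert (Ha : weighted_wronskian s w w' v v' a <= 0).
  { destruct Hwa as [Hwa | ->].
    - apply (weighted_wronskian_at_left_zero s w w' v v' a b (proj2 Hab) Hwa Hwpos);
        [apply (sol_derive _ _ _ _ _ _ Hw) | apply Hvnonneg | apply Hsx]; lra.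
    - unfold weighted_wronskian. rewrite Hv0, Hw0. lra. }
  lra.
Qed.

(** * The solution vanishing at [d] and its Robin defect *)

Lemma regular_sol_pos s k x : 0 <= k -> 0 < regular_sol s k x.
Proof.
  intro Hk. unfold regular_sol.
  assert (1 <= bessel_P (k * (1 - s*x)^2)); [| lra].
  apply bessel_P_ge1, Rmult_le_pos; [exact Hk | apply pow2_ge_0].
Qed.

Lemma is_derive_lincomb (a b : R) (f g : R -> R) (x lf lg : R) :
  is_derive f x lf -> is_derive g x lg ->
  is_derive (fun t => a * f t - b * g t) x (a * lf - b * lg).
Proof.
  intros Hf Hg. auto_derive.
  - split; [exists lf; exact Hf | split; [exists lg; exact Hg | exact I]].
  - rewrite (is_derive_unique_eta _ _ _ Hf), (is_derive_unique_eta _ _ _ Hg). ring.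
Qed.

Section DirichletSolution.

Variables s k d : R.
Hypothesis Hs : 0 < s.
Hypothesis Hk : 0 <= k.
Hypothesis Hd : 0 < d.
Hypothesis Hsd : s * d < 1.

Lemma weight_pos x : 0 <= x <= d -> 0 < 1 - s*x.
Proof. intro Hx. nra. Qed.

Definition dirichlet_sol (x : R) : R :=
  log_sol s k d * regular_sol s k x - regular_sol s k d * log_sol s k x.
Definition dirichlet_sol' (x : R) : R :=
  log_sol s k d * regular_sol' s k x - regular_sol s k d * log_sol' s k x.
Definition dirichlet_sol'' (x : R) : R :=
  log_sol s k d * regular_sol'' s k x - regular_sol s k d * log_sol'' s k x.

Lemma dirichlet_sol_solution :
  ode_solution s d (-4*s^2*k) dirichlet_sol dirichlet_sol' dirichlet_sol''.
Proof.
  split; intros x Hx; pose proof (weight_pos x Hx) as Hw;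
    unfold dirichlet_sol, dirichlet_sol', dirichlet_sol''.
  - apply is_derive_lincomb; [apply is_derive_regular_sol | apply is_derive_log_sol, Hw].
  - apply is_derive_lincomb; [apply is_derive_regular_sol' | apply is_derive_log_sol', Hw].
  - pose proof (regular_sol_ode s k x Hw). pose proof (log_sol_ode s k x Hw).
    transitivity (log_sol s k d * (- regular_sol'' s k x + s / (1 - s*x) * regular_sol' s k x)
      - regular_sol s k d * (- log_sol'' s k x + s / (1 - s*x) * log_sol' s k x)); [ring |].
    rewrite H, H0. ring.
Qed.

Lemma dirichlet_sol_d : dirichlet_sol d = 0.
Proof. unfold dirichlet_sol. ring. Qed.

Lemma dirichlet_sol'_d : (1 - s*d) * dirichlet_sol' d = - s.
Proof.
  pose proof (regular_log_wronskian s k d ltac:(lra)) as W.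
  unfold dirichlet_sol'.
  transitivity (- ((1 - s*d)
    * (regular_sol s k d * log_sol' s k d - regular_sol' s k d * log_sol s k d))).
  - ring.
  - rewrite W. reflexivity.
Qed.

Lemma dirichlet_sol_pos x : 0 <= x < d -> 0 < dirichlet_sol x.
Proof.
  intro Hx.
  (* [log_sol / regular_sol] increases: its derivative is the Wronskian over [regular_sol^2]. *)
  destruct (MVT_cor2 (fun t => log_sol s k t / regular_sol s k t)
              (fun t => s / ((1 - s*t) * regular_sol s k t ^ 2)) x d) as [c [Hc Hxc]];
    [lra | |].
  - intros t Ht. apply is_derive_Reals.
    pose proof (weight_pos t ltac:(lra)) as Hw. pose proof (regular_sol_pos s k t Hk).
    pose proof (regular_log_wronskian s k t Hw) as W.
    assert (W' : regular_sol s k t * log_sol' s k t - regular_sol' s k t * log_sol s k t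
                 = s / (1 - s*t)).
    { apply Rmult_eq_reg_l with (1 - s*t); [rewrite W; field |]; lra. }
    replace (s / ((1 - s*t) * regular_sol s k t ^ 2)) with
      ((log_sol' s k t * regular_sol s k t - log_sol s k t * regular_sol' s k t)
         / regular_sol s k t ^ 2).
    2: { rewrite (Rmult_comm (log_sol' _ _ _)), (Rmult_comm (log_sol _ _ _)), W'. field; lra. }
    apply is_derive_div; [apply is_derive_log_sol, Hw | apply is_derive_regular_sol | lra].
  - pose proof (weight_pos c ltac:(lra)). pose proof (regular_sol_pos s k c Hk).
    pose proof (regular_sol_pos s k x Hk). pose proof (regular_sol_pos s k d Hk).
    assert (Hslope : 0 < s / ((1 - s*c) * regular_sol s k c ^ 2))
      by (apply Rdiv_lt_0_compat; [lra | apply Rmult_lt_0_compat; [lra | apply pow_lt; lra]]).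
    unfold dirichlet_sol.
    replace (log_sol s k d * regular_sol s k x - regular_sol s k d * log_sol s k x) with
      (regular_sol s k x * regular_sol s k d
        * (log_sol s k d / regular_sol s k d - log_sol s k x / regular_sol s k x))
      by (field; lra).
    rewrite Hc. apply Rmult_lt_0_compat; [nra |]. apply Rmult_lt_0_compat; lra.
Qed.

Lemma weighted_dirichlet_sol'_le x : 0 <= x <= d -> (1 - s*x) * dirichlet_sol' x <= - s.
Proof.
  intro Hx. rewrite <- dirichlet_sol'_d.
  destruct (Req_dec x d) as [-> | Hxd]; [lra |].
  destruct dirichlet_sol_solution as [_ Du' Eu].
  (* [((1 - s x) u')' = 4 s^2 k (1 - s x) u >= 0]. *)
  destruct (MVT_cor2 (fun t => (1 - s*t) * dirichlet_sol' t)
              (fun t => 4*s^2*k * (1 - s*t) * dirichlet_sol t) x d) as [c [Hc Hxc]];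
    [lra | |].
  - intros t Ht. apply is_derive_Reals.
    pose proof (weight_pos t ltac:(lra)). specialize (Eu t ltac:(lra)).
    specialize (Du' t ltac:(lra)). auto_derive.
    + exists (dirichlet_sol'' t). exact Du'.
    + rewrite (is_derive_unique_eta _ _ _ Du').
      replace (dirichlet_sol'' t) with
        (s / (1 - s*t) * dirichlet_sol' t + 4*s^2*k * dirichlet_sol t) by lra.
      field. lra.
  - assert (0 <= dirichlet_sol c).
    { destruct (Req_dec c d) as [-> |]; [rewrite dirichlet_sol_d; lra |].
      apply Rlt_le, dirichlet_sol_pos. lra. }
    pose proof (weight_pos c ltac:(lra)).
    assert (0 <= 4*s^2*k * (1 - s*c) * dirichlet_sol c).
    { apply Rmult_le_pos; [apply Rmult_le_pos |]; nra. }
    nra.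
Qed.

Lemma dirichlet_sol_0_ge : s * d <= dirichlet_sol 0.
Proof.
  destruct dirichlet_sol_solution as [Du _ _].
  destruct (MVT_cor2 dirichlet_sol dirichlet_sol' 0 d) as [c [Hc Hxc]]; [lra | |].
  - intros t Ht. apply is_derive_Reals, Du. exact Ht.
  - rewrite dirichlet_sol_d in Hc.
    pose proof (weighted_dirichlet_sol'_le c ltac:(lra)). pose proof (weight_pos c ltac:(lra)).
    assert (dirichlet_sol' c <= - s) by nra.
    nra.
Qed.

End DirichletSolution.

Definition robin_defect (s k d : R) : R := dirichlet_sol s k d 0 + dirichlet_sol' s k d 0.

Lemma continuity_robin_defect s d : continuity (fun k => robin_defect s k d).
Proof.
  intro k. apply derivable_continuous_pt. eexists. apply is_derive_Reals.
  unfold robin_defect, dirichlet_sol, dirichlet_sol', regular_sol, regular_sol', log_sol, log_sol'.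
  bessel_derive. reflexivity.
Qed.

Lemma robin_defect_wronskian_bound s k d (v v' v'' : R -> R) :
  0 < s -> 0 <= k -> 0 < d -> s * d < 1 ->
  (forall x, 0 <= x <= d -> is_derive v x (v' x)) ->
  (forall x, 0 <= x <= d -> is_derive v' x (v'' x)) ->
  (forall x, 0 < x < d -> sturm_residual s (-4*s^2*k) v v' v'' x < 0) ->
  s * v d < v' 0 * dirichlet_sol s k d 0 - v 0 * dirichlet_sol' s k d 0.
Proof.
  intros Hs Hk Hd Hsd Dv Dv' Hres.
  assert (Hdecr : weighted_wronskian s (dirichlet_sol s k d) (dirichlet_sol' s k d) v v' d
                  < weighted_wronskian s (dirichlet_sol s k d) (dirichlet_sol' s k d) v v' 0).
  { apply (weighted_wronskian_decreasing s d (-4*s^2*k) _ _ (dirichlet_sol'' s k d) v v' v'');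
      [exact (dirichlet_sol_solution s k d Hs Hsd) | exact Dv | exact Dv'
      | exact (weight_pos s d Hs Hsd) | lra | lra | lra |].
    intros x Hx. specialize (Hres x Hx).
    pose proof (dirichlet_sol_pos s k d Hs Hk Hsd x ltac:(lra)). nra. }
  unfold weighted_wronskian in Hdecr. rewrite dirichlet_sol_d in Hdecr.
  replace ((1 - s*d) * (v' d * 0 - v d * dirichlet_sol' s k d d))
    with (- v d * ((1 - s*d) * dirichlet_sol' s k d d)) in Hdecr by ring.
  rewrite dirichlet_sol'_d in Hdecr by assumption.
  lra.
Qed.

(** * Quasimodes and the sign of the Robin defect *)

(* For [a = 0], an approximate eigenfunction for the eigenvalue [-1 - s - s^2/2]:
   by [sturm_residual_quasimode] its residual is [s^2 e^(-x) O(s x + s x^2)].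
   The term [a x] only moves the Robin data at [0]. *)
Definition quasimode (a s x : R) : R := exp (- x) * (1 + a*x + s^2*x^2/4).
Definition quasimode' (a s x : R) : R := exp (- x) * (a + s^2*x/2 - (1 + a*x + s^2*x^2/4)).
Definition quasimode'' (a s x : R) : R :=
  exp (- x) * (s^2/2 - 2*(a + s^2*x/2) + (1 + a*x + s^2*x^2/4)).

Lemma is_derive_quasimode a s x : is_derive (quasimode a s) x (quasimode' a s x).
Proof. unfold quasimode, quasimode'. auto_derive; [exact I | field]. Qed.

Lemma is_derive_quasimode' a s x : is_derive (quasimode' a s) x (quasimode'' a s x).
Proof. unfold quasimode', quasimode''. auto_derive; [exact I | field]. Qed.

Lemma quasimode_0 a s : quasimode a s 0 = 1.
Proof. unfold quasimode. rewrite Ropp_0, exp_0. field. Qed.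

Lemma quasimode'_0 a s : quasimode' a s 0 = a - 1.
Proof. unfold quasimode'. rewrite Ropp_0, exp_0. field. Qed.

Lemma sturm_residual_quasimode al mu s x :
  sturm_residual s (-1 - s - s^2/2 + mu*s^2)
    (quasimode (al*s^2) s) (quasimode' (al*s^2) s) (quasimode'' (al*s^2) s) x
  = exp (- x) * s^2 *
      (mu * (1 - s*x) * (1 + al*s*(s*x) + (s*x)^2/4)
       - al * (2 + s - 2*(s*x) + s*(s*x)/2 - (s*x)^2 - s*(s*x)^2/2)
       - ((s*x)/2 - s*x^2 + (s*x)^2/8 - (s*x)*(s*x^2)/4 - (s*x)^3/8)).
Proof. unfold sturm_residual, quasimode, quasimode', quasimode''. field. Qed.

Record asymptotic_regime (e s d : R) : Prop := {
  regime_e : 0 < e;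
  regime_s : 0 < s <= 1;
  regime_d : 1 <= d;
  regime_sd : s * d <= 1/2;
  regime_sd_e : s * d <= e/8;
  regime_sd2_e : s * d^2 <= e/8;
  regime_es2 : e * s^2 <= 1;
  regime_exp : 64 * exp (- d) <= e * s^2 }.

Lemma quasimode_poly_lower t m e : 0 < e -> 0 <= t <= 1/2 -> t <= e/8 -> 0 <= m <= e/8 ->
  0 < t/2 - m + t^2/8 - t*m/4 - t^3/8 + e*(1 - t)*(1 + t^2/4).
Proof.
  intros He Ht Hte Hm.
  assert (t*m <= e/16) by nra. assert (t^3 <= e/32) by nra.
  assert (e/2 <= e*(1 - t)*(1 + t^2/4)) by (assert (0 <= e*t^2) by nra; nra).
  nra.
Qed.

Lemma quasimode_poly_upper t m e s : 0 < e -> 0 <= t <= 1/2 -> t <= e/8 -> 0 <= m ->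
  0 <= s <= 1 ->
  0 < e*(1 - t)*(1 + (e/16)*s*t + t^2/4)
      - (e/16)*(2 + s - 2*t + s*t/2 - t^2 - s*t^2/2)
      - (t/2 - m + t^2/8 - t*m/4 - t^3/8).
Proof.
  intros He Ht Hte Hm Hs.
  assert (0 <= t*m) by nra. assert (0 <= t^3) by nra. assert (t^2 <= e/16) by nra.
  assert (2 + s - 2*t + s*t/2 - t^2 - s*t^2/2 <= 13/4) by nra.
  assert (0 <= (e/16)*s*t) by (apply Rmult_le_pos; [apply Rmult_le_pos |]; lra).
  assert (e/2 <= e*(1 - t)*(1 + (e/16)*s*t + t^2/4))
    by (assert (0 <= e*(1 - t)*((e/16)*s*t + t^2/4)) by (apply Rmult_le_pos; nra); nra).
  nra.
Qed.

Lemma robin_defect_neg e s k d : asymptotic_regime e s d ->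
  -4*s^2*k = -1 - s - s^2/2 - e*s^2 -> robin_defect s k d < 0.
Proof.
  intros [He Hs Hd Hsd Hsde Hsd2 _ _] Hk.
  assert (Hk0 : 0 <= k) by nra.
  assert (Hphi : 0 < quasimode (0*s^2) s d)
    by (unfold quasimode; apply Rmult_lt_0_compat; [apply exp_pos | nra]).
  assert (Hbound : s * quasimode (0*s^2) s d
                   < quasimode' (0*s^2) s 0 * dirichlet_sol s k d 0
                     - quasimode (0*s^2) s 0 * dirichlet_sol' s k d 0).
  { apply (robin_defect_wronskian_bound s k d _ _ (quasimode'' (0*s^2) s)); try lra;
      [intros; apply is_derive_quasimode | intros; apply is_derive_quasimode' |].
    intros x Hx.
    replace (-4*s^2*k) with (-1 - s - s^2/2 + (-e)*s^2) by lra.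
    rewrite sturm_residual_quasimode.
    assert (Hsx : s*x <= s*d) by nra. assert (Hsx2 : s*x^2 <= s*d^2) by nra.
    pose proof (quasimode_poly_lower (s*x) (s*x^2) e He ltac:(split; nra) ltac:(lra)
                  ltac:(split; nra)).
    pose proof (exp_pos (- x)). assert (0 < s^2) by nra.
    assert (0 < exp (- x) * s^2) by (apply Rmult_lt_0_compat; lra).
    set (t := s*x) in *. set (m := s*x^2) in *.
    replace (- e * (1 - t) * (1 + 0 * s * t + t^2/4)
             - 0 * (2 + s - 2*t + s*t/2 - t^2 - s*t^2/2)
             - (t/2 - m + t^2/8 - t*m/4 - t^3/8))
      with (- (t/2 - m + t^2/8 - t*m/4 - t^3/8 + e*(1 - t)*(1 + t^2/4))) by ring.
    nra. }
  rewrite quasimode_0, quasimode'_0 in Hbound.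
  unfold robin_defect. nra.
Qed.

Lemma quasimode_lt e s d : asymptotic_regime e s d -> quasimode (e/16*s^2) s d < e/16*s^2 * d.
Proof.
  intros [He Hs Hd Hsd _ _ Hes2 Hexp].
  unfold quasimode. set (a := e/16*s^2).
  assert (0 < a) by (apply Rmult_lt_0_compat; [lra | apply pow_lt; lra]).
  assert (0 < a * d) by (apply Rmult_lt_0_compat; lra).
  assert (4 * exp (- d) <= a * d) by (unfold a in *; nra).
  assert (exp (- d) <= 1/2) by lra.
  assert (s^2 * d^2 <= 1/4) by (assert (0 <= s*d) by nra; nra).
  pose proof (exp_pos (- d)).
  assert (exp (- d) * (a * d) <= a * d / 2) by nra.
  assert (exp (- d) * (s^2 * d^2 / 4) <= exp (- d) / 16) by nra.
  nra.
Qed.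

Lemma robin_defect_pos e s k d : asymptotic_regime e s d ->
  -4*s^2*k = -1 - s - s^2/2 + e*s^2 -> 0 < robin_defect s k d.
Proof.
  intros Hreg Hk. pose proof (quasimode_lt e s d Hreg) as Hphi.
  destruct Hreg as [He Hs Hd Hsd Hsde _ Hes2 _].
  assert (Hk0 : 0 <= k) by nra.
  set (a := e/16*s^2) in *.
  assert (Hbound : s * - quasimode a s d
                   < - quasimode' a s 0 * dirichlet_sol s k d 0
                     - - quasimode a s 0 * dirichlet_sol' s k d 0).
  { apply (robin_defect_wronskian_bound s k d (fun x => - quasimode a s x)
             (fun x => - quasimode' a s x) (fun x => - quasimode'' a s x)); try lra;
      [intros; apply (is_derive_opp (quasimode a s)), is_derive_quasimode
      | intros; apply (is_derive_opp (quasimode' a s)), is_derive_quasimode' |].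
    intros x Hx.
    replace (sturm_residual s (-4*s^2*k) (fun x => - quasimode a s x)
               (fun x => - quasimode' a s x) (fun x => - quasimode'' a s x) x)
      with (- sturm_residual s (-1 - s - s^2/2 + e*s^2)
                (quasimode ((e/16)*s^2) s) (quasimode' ((e/16)*s^2) s)
                (quasimode'' ((e/16)*s^2) s) x)
      by (unfold sturm_residual, a; rewrite Hk; ring).
    rewrite sturm_residual_quasimode.
    assert (Hsx : s*x <= s*d) by nra.
    pose proof (quasimode_poly_upper (s*x) (s*x^2) e s He ltac:(split; nra) ltac:(lra)
                  ltac:(nra) ltac:(lra)).
    pose proof (exp_pos (- x)). assert (0 < s^2) by nra.
    assert (0 < exp (- x) * s^2) by (apply Rmult_lt_0_compat; lra).
    set (t := s*x) in *. set (m := s*x^2) in *.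
    nra. }
  rewrite quasimode_0, quasimode'_0 in Hbound.
  pose proof (dirichlet_sol_0_ge s k d ltac:(lra) Hk0 ltac:(lra) ltac:(lra)).
  assert (0 < a) by (apply Rmult_lt_0_compat; [lra | apply pow_lt; lra]).
  unfold robin_defect. nra.
Qed.

Lemma robin_defect_root e s d : asymptotic_regime e s d ->
  exists k, 0 <= k /\ robin_defect s k d = 0 /\
            Rabs (-4*s^2*k - (-1 - s - s^2/2)) <= e * s^2.
Proof.
  intros Hreg. pose proof Hreg as [He Hs _ _ _ _ Hes2 _].
  assert (Hs2 : 0 < s^2) by nra.
  set (k_lo := (1 + s + s^2/2 - e*s^2) / (4*s^2)).
  set (k_hi := (1 + s + s^2/2 + e*s^2) / (4*s^2)).
  assert (Hlo : -4*s^2*k_lo = -1 - s - s^2/2 + e*s^2) by (unfold k_lo; field; lra).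
  assert (Hhi : -4*s^2*k_hi = -1 - s - s^2/2 - e*s^2) by (unfold k_hi; field; lra).
  assert (Hlohi : k_lo < k_hi) by nra.
  destruct (IVT (fun k => - robin_defect s k d) k_lo k_hi) as [k [Hk Hroot]];
    [apply continuity_opp, continuity_robin_defect | exact Hlohi
    | pose proof (robin_defect_pos e s k_lo d Hreg Hlo); lra
    | pose proof (robin_defect_neg e s k_hi d Hreg Hhi); lra |].
  exists k. split; [| split; [lra | apply Rabs_le; split; nra]].
  assert (0 <= k_lo); [| lra].
  unfold k_lo. apply Rmult_le_pos; [nra | apply Rlt_le, Rinv_0_lt_compat; lra].
Qed.

Lemma eigenfunction_ode_solution h rho lam u u' u'' :
  is_eigenfunction h rho lam u u' u'' -> ode_solution (sqrt h) (delta h rho) lam u u' u''.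
Proof.
  intros [Du [Du' [_ [_ [Eu _]]]]].
  split; [intros x Hx; apply is_derive_Reals, Du, Hx
         | intros x Hx; apply is_derive_Reals, Du', Hx | exact Eu].
Qed.

Lemma is_lowest_eigenvalue_of_robin_root h rho k :
  0 < sqrt h -> 0 < delta h rho -> sqrt h * delta h rho < 1 -> 0 <= k ->
  robin_defect (sqrt h) k (delta h rho) = 0 ->
  is_lowest_eigenvalue h rho (-4 * sqrt h ^ 2 * k).
Proof.
  intros Hs Hd Hsd Hk Hroot.
  set (s := sqrt h) in *. set (d := delta h rho) in *.
  pose proof (dirichlet_sol_solution s k d Hs Hsd) as Hu.
  assert (Hpos : forall x, 0 <= x < d -> 0 < dirichlet_sol s k d x)
    by exact (dirichlet_sol_pos s k d Hs Hk Hsd).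
  split.
  - exists (dirichlet_sol s k d), (dirichlet_sol' s k d), (dirichlet_sol'' s k d).
    destruct Hu as [Du Du' Eu]. unfold robin_defect in Hroot.
    repeat split.
    + intros x Hx. apply is_derive_Reals, Du, Hx.
    + intros x Hx. apply is_derive_Reals, Du', Hx.
    + lra.
    + apply dirichlet_sol_d.
    + exact Eu.
    + exists 0. split; [split; [right; reflexivity | left; exact Hd] |].
      apply Rgt_not_eq, Hpos. lra.
  - intros mu [w [w' [w'' Hw]]].
    pose proof (eigenfunction_ode_solution h rho mu w w' w'' Hw) as Hwsol.
    destruct Hw as [_ [_ [Hw0 [Hwd [_ [x1 [Hx1 Hwx1]]]]]]].
    fold s d in Hwsol, Hw0, Hwd, Hx1.
    assert (Hu0 : dirichlet_sol' s k d 0 = - dirichlet_sol s k d 0)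
      by (unfold robin_defect in Hroot; lra).
    assert (Hud : 0 <= dirichlet_sol s k d d) by (rewrite dirichlet_sol_d; lra).
    destruct (Rlt_or_le 0 (w x1)) as [Hwpos | Hwneg].
    + exact (eigenvalue_le_of_positive_solution s d _ mu _ _ _ w w' w'' x1
               (weight_pos s d Hs Hsd) Hu Hwsol Hu0 Hw0 Hwd Hpos Hud Hx1 Hwpos).
    + refine (eigenvalue_le_of_positive_solution s d _ mu _ _ _ _ _ _ x1
               (weight_pos s d Hs Hsd) Hu (ode_solution_opp s d mu w w' w'' Hwsol)
               Hu0 _ _ Hpos Hud Hx1 _); cbv beta; [rewrite Hw0 | rewrite Hwd |]; lra.
Qed.

Lemma at_right_0_iff (P : R -> Prop) :
  at_right 0 P <-> exists h0, 0 < h0 /\ forall h, 0 < h < h0 -> P h.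
Proof.
  split.
  - intros [[h0 Hh0] Hnear]. exists h0. split; [exact Hh0 |].
    intros h Hh. apply Hnear; [| lra].
    unfold ball; simpl; unfold AbsRing_ball, abs, minus, plus, opp; simpl.
    rewrite Ropp_0, Rplus_0_r, Rabs_pos_eq; lra.
  - intros [h0 [Hh0 HP]]. exists (mkposreal h0 Hh0). intros h Hball Hh.
    apply HP. split; [exact Hh |].
    unfold ball in Hball; simpl in Hball; unfold AbsRing_ball, abs, minus, plus, opp in Hball;
      simpl in Hball.
    rewrite Ropp_0, Rplus_0_r, Rabs_pos_eq in Hball; lra.
Qed.

Lemma Rpower_small r c : 0 < r -> 0 < c -> at_right 0 (fun h => Rpower h r < c).
Proof.
  intros Hr Hc. apply at_right_0_iff. exists (Rpower c (/ r)). split; [apply exp_pos |].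
  intros h Hh.
  assert (Hcr : Rpower (Rpower c (/ r)) r = c) by (rewrite Rpower_mult, Rinv_l, Rpower_1; lra).
  rewrite <- Hcr. apply Rlt_Rpower_l; assumption.
Qed.

Lemma exp_le_mono x y : x <= y -> exp x <= exp y.
Proof. intros [Hlt | ->]; [left; apply exp_increasing, Hlt | right; reflexivity]. Qed.

Lemma exp_ge_sqr_div4 y : 0 <= y -> y^2 / 4 <= exp y.
Proof.
  intro Hy. replace (exp y) with (exp (y/2) * exp (y/2)) by (rewrite <- exp_plus; f_equal; field).
  pose proof (exp_ineq1_le (y/2)). nra.
Qed.

(* With [L = - ln h], the claim reads [L + ln (/ c) <= exp (sigma L)]. *)
Lemma exp_neg_Rpower_small sigma c : 0 < sigma -> 0 < c ->
  at_right 0 (fun h => exp (- Rpower h (- sigma)) <= c * h).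
Proof.
  intros Hsigma Hc. apply at_right_0_iff.
  set (L0 := 1 + 4 * (1 + Rabs (ln c)) / sigma^2).
  assert (HL0 : 1 <= L0).
  { unfold L0. assert (0 <= 4 * (1 + Rabs (ln c)) / sigma^2); [| lra].
    apply Rmult_le_pos; [pose proof (Rabs_pos (ln c)); lra |].
    apply Rlt_le, Rinv_0_lt_compat, pow_lt, Hsigma. }
  exists (exp (- L0)). split; [apply exp_pos |].
  intros h [Hh Hh0].
  set (L := - ln h).
  assert (HL : L0 < L)
    by (unfold L; apply ln_increasing in Hh0; [rewrite ln_exp in Hh0; lra | exact Hh]).
  assert (Hpow : Rpower h (- sigma) = exp (sigma * L)) by (unfold Rpower, L; f_equal; ring).
  rewrite Hpow.
  replace (c * h) with (exp (ln c - L))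
    by (unfold Rminus, L; rewrite Ropp_involutive, exp_plus, !exp_ln; lra).
  apply exp_le_mono.
  pose proof (exp_ge_sqr_div4 (sigma * L) ltac:(nra)).
  pose proof (Rle_abs (- ln c)) as Habs. rewrite Rabs_Ropp in Habs.
  assert (1 + Rabs (ln c) <= sigma^2 * L / 4).
  { assert (4 * (1 + Rabs (ln c)) / sigma^2 <= L) by (unfold L0 in HL; lra).
    apply Rmult_le_reg_l with (4 / sigma^2).
    - apply Rdiv_lt_0_compat; [lra | apply pow_lt, Hsigma].
    - replace (4 / sigma^2 * (sigma^2 * L / 4)) with L by (field; lra).
      unfold Rdiv in *. lra. }
  assert (L + Rabs (ln c) <= L * (1 + Rabs (ln c))) by (pose proof (Rabs_pos (ln c)); nra).
  assert (L * (1 + Rabs (ln c)) <= (sigma * L)^2 / 4) by nra.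
  lra.
Qed.

Lemma Rpower_1_base z : Rpower 1 z = 1.
Proof. unfold Rpower. rewrite ln_1, Rmult_0_r. apply exp_0. Qed.

Lemma asymptotic_regime_of_small_h rho e h : 1/4 < rho < 1/2 -> 0 < e -> 0 < h ->
  h < 1 -> e * h < 1 -> Rpower h rho < 1/2 -> Rpower h rho < e/8 ->
  Rpower h (2*rho - 1/2) < e/8 -> exp (- Rpower h (- (1/2 - rho))) <= e/64 * h ->
  asymptotic_regime e (sqrt h) (delta h rho).
Proof.
  intros Hrho He Hh Hh1 Heh Hsd Hsde Hsd2 Hexp.
  assert (Hs : sqrt h = Rpower h (/2)) by (symmetry; apply Rpower_sqrt, Hh).
  assert (Hs2 : sqrt h ^ 2 = h) by (simpl; rewrite Rmult_1_r; apply sqrt_sqrt; lra).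
  assert (Hsd_eq : sqrt h * delta h rho = Rpower h rho)
    by (unfold delta; rewrite Hs, <- Rpower_plus; f_equal; field).
  assert (Hsd2_eq : sqrt h * delta h rho ^ 2 = Rpower h (2*rho - 1/2))
    by (unfold delta; rewrite Hs; simpl; rewrite Rmult_1_r, <- !Rpower_plus; f_equal; field).
  assert (Hd : 1 <= delta h rho).
  { unfold delta. replace (rho - 1/2) with (- (1/2 - rho)) by ring. rewrite Rpower_Ropp.
    assert (Rpower h (1/2 - rho) < 1).
    { rewrite <- (Rpower_1_base (1/2 - rho)) at 2. apply Rlt_Rpower_l; lra. }
    assert (0 < Rpower h (1/2 - rho)) by apply exp_pos.
    apply Rmult_le_reg_l with (Rpower h (1/2 - rho)); [lra |].
    rewrite Rinv_r by lra. lra. }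
  split.
  - exact He.
  - split; [apply sqrt_lt_R0, Hh |]. rewrite <- sqrt_1. apply sqrt_le_1_alt. lra.
  - exact Hd.
  - lra.
  - lra.
  - lra.
  - rewrite Hs2. lra.
  - rewrite Hs2. unfold delta. replace (rho - 1/2) with (- (1/2 - rho)) by ring. lra.
Qed.

Lemma eventually_asymptotic_regime rho e : 1/4 < rho < 1/2 -> 0 < e ->
  at_right 0 (fun h => asymptotic_regime e (sqrt h) (delta h rho)).
Proof.
  intros Hrho He.
  assert (Hpos : at_right 0 (fun h => 0 < h))
    by (apply at_right_0_iff; exists 1; split; [lra | tauto]).
  pose proof (Rpower_small 1 (Rmin 1 (/ e)) ltac:(lra)
                (Rmin_glb_lt 1 (/ e) 0 ltac:(lra) (Rinv_0_lt_compat e He))) as H1.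
  pose proof (Rpower_small rho (Rmin (1/2) (e/8)) ltac:(lra)
                (Rmin_glb_lt (1/2) (e/8) 0 ltac:(lra) ltac:(lra))) as H2.
  pose proof (Rpower_small (2*rho - 1/2) (e/8) ltac:(lra) ltac:(lra)) as H3.
  pose proof (exp_neg_Rpower_small (1/2 - rho) (e/64) ltac:(lra) ltac:(lra)) as H4.
  generalize (filter_and _ _ Hpos (filter_and _ _ H1 (filter_and _ _ H2 (filter_and _ _ H3 H4)))).
  apply filter_imp. intros h [Hh [Hh1 [Hh2 [Hh3 Hh4]]]].
  rewrite Rpower_1 in Hh1 by exact Hh.
  apply asymptotic_regime_of_small_h; try assumption.
  - pose proof (Rmin_l 1 (/ e)). lra.
  - pose proof (Rmin_r 1 (/ e)).
    apply Rmult_lt_reg_l with (/ e); [apply Rinv_0_lt_compat, He |].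
    rewrite <- Rmult_assoc, Rinv_l, Rmult_1_l, Rmult_1_r by lra. lra.
  - pose proof (Rmin_l (1/2) (e/8)). lra.
  - pose proof (Rmin_r (1/2) (e/8)). lra.
Qed.

Theorem lemma2p5 (rho : R) (Hrho : 1/4 < rho < 1/2) :
  forall eps : R, 0 < eps ->
  exists h0 : R, 0 < h0 /\
  forall h : R, 0 < h < h0 -> h < 1 -> Rpower h (1/2 - rho) < 1/3 ->
  exists lam : R, is_lowest_eigenvalue h rho lam /\
    Rabs (lam - (-1 - sqrt h - h / 2)) <= eps * h.
Proof.
  intros eps Heps.
  destruct (proj1 (at_right_0_iff _) (eventually_asymptotic_regime rho eps Hrho Heps))
    as [h0 [Hh0 Hregime]].
  exists h0. split; [exact Hh0 |]. intros h Hh _ _.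
  pose proof (Hregime h Hh) as Hreg.
  destruct (robin_defect_root eps (sqrt h) (delta h rho) Hreg) as [k [Hk [Hroot Hclose]]].
  destruct Hreg as [_ Hs Hd Hsd _ _ _ _].
  assert (Hs2 : sqrt h ^ 2 = h) by (simpl; rewrite Rmult_1_r; apply sqrt_sqrt; lra).
  exists (-4 * sqrt h ^ 2 * k). split.
  - apply is_lowest_eigenvalue_of_robin_root; lra.
  - rewrite Hs2 in Hclose |- *. exact Hclose.
Qed.
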